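(* Let $s_y\ge 0$ and $t\ge 1$ be integers, $Y=[0,s_y]$, $a=4s_y+3$, and $I_1=[0,t]\times Y$, $T=[0,(t),at^2-t]\times\{0\}$, $S=[at^2,(t+1),(a+1)t^2-1]\times Y$, $I_2=[2at^2,2at^2+t]\times Y$, $I_3=[(3a+1)t^2,(3a+1)t^2+t]\times Y$, and $A=I_1\cup I_2\cup I_3\cup T\cup S$. Then $|A|=(8s_y+7)t+(3s_y+1)$ and $A+A\supseteq[0,(16s_y+14)t^2-1]\times[0,s_y]$.
   Context: For integers $a\le b$, $[a,b]$ denotes $\{a,\dots,b\}$. For integers $a\le b$ and $t\ge1$ with $t\mid b-a$, $[a,(t),b]=\{a,a+t,a+2t,\dots,b\}$. $A+A=\{(x+x',y+y'):(x,y),(x',y')\in A\}$ (summands may coincide). *)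

(* All points involved have nonnegative coordinates, so we
   work with nat * nat. *)
From mathcomp Require Import all_boot.
Set Implicit Arguments. Unset Strict Implicit. Unset Printing Implicit Defensive.

Definition intv (a b : nat) : seq nat := iota a (b - a).+1.

(* [a,(t),b] = {a, a+t, ..., b} (for a <= b, t >= 1, t | b - a) *)
Definition aprog (a t b : nat) : seq nat :=
  [seq a + k * t | k <- iota 0 ((b - a) %/ t).+1].

Definition prodl (X Y : seq nat) : seq (nat * nat) :=
  [seq (x, y) | x <- X, y <- Y].

(* The set A of the statement, as a list (possibly with repetitions) *)
Definition setA (sy t : nat) : seq (nat * nat) :=
  let Y := intv 0 sy in
  let a := 4 * sy + 3 in
  let I1 := prodl (intv 0 t) Y in
  let T := prodl (aprog 0 t (a * t ^ 2 - t)) [:: 0] in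
  let S := prodl (aprog (a * t ^ 2) t.+1 ((a + 1) * t ^ 2 - 1)) Y in
  let I2 := prodl (intv (2 * a * t ^ 2) (2 * a * t ^ 2 + t)) Y in
  let I3 := prodl (intv ((3 * a + 1) * t ^ 2) ((3 * a + 1) * t ^ 2 + t)) Y in
  I1 ++ I2 ++ I3 ++ T ++ S.

Definition in_sumset (A : seq (nat * nat)) (p : nat * nat) : Prop :=
  exists q r, q \in A /\ r \in A /\ p = (q.1 + r.1, q.2 + r.2).

From mathcomp Require Import all_boot zify.
Set Implicit Arguments. Unset Strict Implicit. Unset Printing Implicit Defensive.

(* Put A0 = a t^2. Adding the progression T (step t, a t terms) to an interval
   [e, e + t] of A covers [e, e + A0), and adding the progression S (step t + 1,
   t terms) covers [A0 + e, A0 + e + t^2); moreover S + T covers [A0 + t^2, 2 A0).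
   The seven windows T + I1, S + I1, S + T, T + I2, S + I2, T + I3, S + I3 tile
   [0, 4 A0 + 2 t^2).  For the count, T meets I1 exactly in 0 and t, and the
   blocks I1, T \ {0, t}, S, I2, I3 lie in pairwise disjoint vertical strips. *)

Lemma mem_intv c e x : c <= e -> (x \in intv c e) = (c <= x <= e).
Proof. by move=> ce; rewrite mem_iota; lia. Qed.

Lemma size_intv c e : size (intv c e) = (e - c).+1.
Proof. exact: size_iota. Qed.

Lemma aprog_step_inj c d : 0 < d -> injective (fun k => c + k * d).
Proof. by move=> d_gt0 i j /eqP; rewrite eqn_add2l eqn_pmul2r // => /eqP. Qed.

Lemma mem_aprog c d e k : 0 < d -> (c + k * d \in aprog c d e) = (k * d <= e - c).
Proof. by move=> d_gt0; rewrite (mem_map (@aprog_step_inj c d d_gt0)) mem_iota ltnS leq_divRL. Qed.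

Lemma aprog_bounds c d e x : c <= e -> x \in aprog c d e -> c <= x <= e.
Proof.
move=> ce /mapP[k]; rewrite mem_iota ltnS => /andP[_ le_k] ->.
have := leq_mul le_k (leqnn d); have := leq_divM (e - c) d; lia.
Qed.

Lemma uniq_aprog c d e : 0 < d -> uniq (aprog c d e).
Proof. by move=> d_gt0; rewrite (map_inj_uniq (@aprog_step_inj c d d_gt0)) iota_uniq. Qed.

Lemma size_aprog c d e : size (aprog c d e) = ((e - c) %/ d).+1.
Proof. by rewrite size_map size_iota. Qed.

Lemma aprog_cons c d e : 0 < d -> c + d <= e -> aprog c d e = c :: aprog (c + d) d e.
Proof.
move=> d_gt0 cde; rewrite /aprog.
have -> : (e - c) %/ d = ((e - (c + d)) %/ d).+1.
  by rewrite (_ : e - c = 1 * d + (e - (c + d))) ?divnMDl //; lia.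
rewrite -[iota 0 _.+2]/(0 :: iota 1 _.+1) map_cons (iotaDl 1 0) -map_comp addn0.
by congr cons; apply/eq_map => k /=; rewrite mulnDl mul1n addnA.
Qed.

Lemma mem_prodl X Y x y : ((x, y) \in prodl X Y) = (x \in X) && (y \in Y).
Proof.
apply/allpairsP/andP => [[[x' y'] [/= ? ? [-> ->]]] // | [? ?]].
by exists (x, y).
Qed.

Lemma uniq_prodl X Y : uniq X -> uniq Y -> uniq (prodl X Y).
Proof. by move=> ? ?; apply: allpairs_uniq => // [[? ?] [? ?]] _ _ [-> ->]. Qed.

Lemma size_prodl X Y : size (prodl X Y) = size X * size Y.
Proof. exact: size_allpairs. Qed.

Definition uniq_in_strip (lo hi : nat) (s : seq (nat * nat)) :=
  uniq s /\ {in s, forall p, lo <= p.1 < hi}.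

Lemma uniq_in_strip_cat lo mid hi s1 s2 : lo <= mid <= hi ->
  uniq_in_strip lo mid s1 -> uniq_in_strip mid hi s2 -> uniq_in_strip lo hi (s1 ++ s2).
Proof.
move=> bounds [u1 b1] [u2 b2]; split.
  rewrite cat_uniq u1 u2 andbT; apply/hasPn => p /b2 p2.
  by apply/negP => /b1; lia.
by move=> p; rewrite mem_cat => /orP[/b1 | /b2]; lia.
Qed.

Lemma uniq_in_strip_prodl lo hi X Y : uniq X -> uniq Y ->
  {in X, forall x, lo <= x < hi} -> uniq_in_strip lo hi (prodl X Y).
Proof.
move=> uX uY bX; split; first exact: uniq_prodl.
by move=> [x y]; rewrite mem_prodl => /andP[/bX].
Qed.

Lemma in_sumset_progression_interval A d n c e y0 y1 : 0 < d ->
  (forall k, k < n -> (c + k * d, y0) \in A) -> (forall r, r < d -> (e + r, y1) \in A) ->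
  forall x, c + e <= x < c + e + n * d -> in_sumset A (x, y0 + y1).
Proof.
move=> d_gt0 AP AI x /andP[lo hi].
rewrite -(subnKC lo) in hi *; move: (x - _) hi => m hi.
exists (c + m %/ d * d, y0), (e + m %% d, y1); split; [|split].
- by apply: AP; rewrite ltn_divLR //; lia.
- by apply: AI; rewrite ltn_mod.
- by rewrite /= addnACA -divn_eq.
Qed.

(* [q d + r = r (d + 1) + (q - r) d], where [r < d <= q]. *)
Lemma in_sumset_two_progressions A d n c e y0 y1 : 0 < d ->
  (forall k, k < d -> (c + k * d.+1, y0) \in A) -> (forall k, k < n -> (e + k * d, y1) \in A) ->
  forall x, c + e + d * d <= x < c + e + n * d -> in_sumset A (x, y0 + y1).
Proof.
move=> d_gt0 AS AT x /andP[lo hi]; have ce_le_x : c + e <= x by lia.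
rewrite -(subnKC ce_le_x) in lo hi *; move: (x - _) lo hi => m lo hi.
set q := m %/ d; set r := m %% d.
have r_lt_d : r < d by rewrite ltn_mod.
have d_le_q : d <= q by rewrite leq_divRL //; lia.
have q_lt_n : q < n by rewrite ltn_divLR //; lia.
exists (c + r * d.+1, y0), (e + (q - r) * d, y1); split; [|split].
- exact: AS.
- by apply: AT; lia.
- rewrite /= mulnS mulnBl.
  have : m = q * d + r := divn_eq m d.
  have : r * d <= q * d by rewrite leq_mul2r; apply/orP; right; lia.
  by move=> ? ?; congr pair; lia.
Qed.

Section SetA.

Variables sy t : nat.
Hypothesis t_gt0 : 0 < t.
Local Notation a := (4 * sy + 3).

Definition setI1 := prodl (intv 0 t) (intv 0 sy).
Definition setI2 := prodl (intv (2 * a * t ^ 2) (2 * a * t ^ 2 + t)) (intv 0 sy).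
Definition setI3 := prodl (intv ((3 * a + 1) * t ^ 2) ((3 * a + 1) * t ^ 2 + t)) (intv 0 sy).
Definition setT := prodl (aprog 0 t (a * t ^ 2 - t)) [:: 0].
Definition setS := prodl (aprog (a * t ^ 2) t.+1 ((a + 1) * t ^ 2 - 1)) (intv 0 sy).
Definition setT_tail := prodl (aprog (2 * t) t (a * t ^ 2 - t)) [:: 0].

Lemma setAE : setA sy t = setI1 ++ setI2 ++ setI3 ++ setT ++ setS.
Proof. by []. Qed.

Lemma mem_setA p :
  (p \in setA sy t) = [|| p \in setI1, p \in setI2, p \in setI3, p \in setT | p \in setS].
Proof. by rewrite setAE (mem_cat _ setI1) (mem_cat _ setI2) (mem_cat _ setI3) (mem_cat _ setT). Qed.

Lemma mem_setA_I1 r y : r <= t -> y <= sy -> (r, y) \in setA sy t.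
Proof. by move=> ? ?; rewrite mem_setA [_ \in setI1]mem_prodl !mem_intv //; lia. Qed.

Lemma mem_setA_I2 r y : r <= t -> y <= sy -> (2 * (a * t ^ 2) + r, y) \in setA sy t.
Proof. by move=> ? ?; rewrite mem_setA [_ \in setI2]mem_prodl !mem_intv; lia. Qed.

Lemma mem_setA_I3 r y : r <= t -> y <= sy -> (3 * (a * t ^ 2) + t ^ 2 + r, y) \in setA sy t.
Proof. by move=> ? ?; rewrite mem_setA [_ \in setI3]mem_prodl !mem_intv; lia. Qed.

Lemma mem_setA_T k : k < a * t -> (k * t, 0) \in setA sy t.
Proof.
move=> ?; rewrite mem_setA [_ \in setT]mem_prodl -[k * t]add0n mem_aprog //.
by rewrite mem_seq1 eqxx andbT (_ : k * t <= _) ?orbT //; nia.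
Qed.

Lemma mem_setA_S k y : k < t -> y <= sy -> (a * t ^ 2 + k * t.+1, y) \in setA sy t.
Proof.
move=> ? ?; rewrite mem_setA [_ \in setS]mem_prodl mem_aprog // mem_intv //.
by rewrite (_ : k * t.+1 <= _) ?orbT //=; nia.
Qed.

Lemma setA_sumset_cover x y : x < 4 * (a * t ^ 2) + 2 * t ^ 2 -> y <= sy ->
  in_sumset (setA sy t) (x, y).
Proof.
move=> x_lt y_le.
have memT k : k < a * t -> (0 + k * t, 0) \in setA sy t by rewrite add0n; apply: mem_setA_T.
have memS k : k < t -> (a * t ^ 2 + k * t.+1, y) \in setA sy t by move/mem_setA_S; apply.
have memI1 z r : r <= t -> z <= sy -> (0 + r, z) \in setA sy t by rewrite add0n; apply: mem_setA_I1.
have sqE : a * t ^ 2 = a * t * t by rewrite -mulnn mulnA.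
have sqS : t * t.+1 = t ^ 2 + t by rewrite mulnS -mulnn addnC.
have sqQ : t * t = t ^ 2 by rewrite mulnn.
have T_plus_I e : (forall r, r <= t -> (e + r, y) \in setA sy t) ->
    e <= x < e + a * t ^ 2 -> in_sumset (setA sy t) (x, y).
  move=> memI x_in; rewrite -[y]add0n.
  by apply: (in_sumset_progression_interval (e := e) t_gt0 memT) => [r /ltnW/memI|]; last lia.
have S_plus_I e : (forall r, r <= t -> (e + r, 0) \in setA sy t) ->
    a * t ^ 2 + e <= x < a * t ^ 2 + e + t ^ 2 -> in_sumset (setA sy t) (x, y).
  by move=> memI x_in; rewrite -[y]addn0; apply: (in_sumset_progression_interval _ memS memI); lia.
case: (ltnP x (a * t ^ 2)) => [lt1 | ge1].
  by apply: (T_plus_I 0) => [r r_le|]; [exact: memI1 | lia].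
case: (ltnP x (a * t ^ 2 + t ^ 2)) => [lt2 | ge2].
  by apply: (S_plus_I 0) => [r r_le|]; [exact: memI1 | lia].
case: (ltnP x (2 * (a * t ^ 2))) => [lt3 | ge3].
  by rewrite -[y]addn0; apply: (in_sumset_two_progressions t_gt0 memS memT); lia.
case: (ltnP x (3 * (a * t ^ 2))) => [lt4 | ge4].
  by apply: (T_plus_I (2 * (a * t ^ 2))) => [r r_le|]; [exact: mem_setA_I2 | lia].
case: (ltnP x (3 * (a * t ^ 2) + t ^ 2)) => [lt5 | ge5].
  by apply: (S_plus_I (2 * (a * t ^ 2))) => [r r_le|]; [exact: mem_setA_I2 | lia].
case: (ltnP x (4 * (a * t ^ 2) + t ^ 2)) => [lt6 | ge6].
  by apply: (T_plus_I (3 * (a * t ^ 2) + t ^ 2)) => [r r_le|]; [exact: mem_setA_I3 | lia].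
by apply: (S_plus_I (3 * (a * t ^ 2) + t ^ 2)) => [r r_le|]; [exact: mem_setA_I3 | lia].
Qed.

Lemma setT_split : setT = (0, 0) :: (t, 0) :: setT_tail.
Proof.
have le1 : 0 + t <= a * t ^ 2 - t by nia.
have le2 : 0 + t + t <= a * t ^ 2 - t by nia.
by rewrite /setT (aprog_cons t_gt0 le1) (aprog_cons t_gt0 le2) add0n addnn -mul2n.
Qed.

Lemma setA_blocks :
  setA sy t =i setI1 ++ setT_tail ++ setS ++ setI2 ++ setI3.
Proof.
move=> p; rewrite mem_setA setT_split (mem_cat _ setI1) (mem_cat _ setT_tail) (mem_cat _ setS).
rewrite (mem_cat _ setI2) (in_cons (0, 0) ((t, 0) :: setT_tail)) (in_cons (t, 0) setT_tail).
have corners_in_I1 : (p == (0, 0)) || (p == (t, 0)) -> p \in setI1.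
  by case/orP => /eqP->; rewrite mem_prodl !mem_intv ?leqnn.
case: (p \in setI1) corners_in_I1 => [_ // | /contraFF/(_ erefl)/negbT/norP].
move=> [/negbTE-> /negbTE->].
by case: (p \in setT_tail); case: (p \in setS); case: (p \in setI2); case: (p \in setI3).
Qed.

Lemma uniq_in_strip_blocks :
  uniq_in_strip 0 (4 * (a * t ^ 2)) (setI1 ++ setT_tail ++ setS ++ setI2 ++ setI3).
Proof.
have uY : uniq (intv 0 sy) := iota_uniq _ _.
have t_le_sq : t <= t ^ 2 by nia.
have sq_le_A : 3 * t ^ 2 <= a * t ^ 2 by nia.
apply: (uniq_in_strip_cat (mid := 2 * t)); first lia.
  by apply: uniq_in_strip_prodl (iota_uniq _ _) uY _ => x; rewrite mem_intv //; lia.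
apply: (uniq_in_strip_cat (mid := a * t ^ 2)); first lia.
  have le_T : 2 * t <= a * t ^ 2 - t by nia.
  by apply: uniq_in_strip_prodl (uniq_aprog _ _ t_gt0) _ _ => // x /(aprog_bounds le_T); lia.
apply: (uniq_in_strip_cat (mid := 2 * (a * t ^ 2))); first lia.
  have le_S : a * t ^ 2 <= (a + 1) * t ^ 2 - 1 by nia.
  by apply: uniq_in_strip_prodl (uniq_aprog _ _ (ltn0Sn t)) uY _ => x /(aprog_bounds le_S); lia.
apply: (uniq_in_strip_cat (mid := 3 * (a * t ^ 2))); first lia.
  by apply: uniq_in_strip_prodl (iota_uniq _ _) uY _ => x; rewrite mem_intv; lia.
apply: uniq_in_strip_prodl (iota_uniq _ _) uY _ => x; rewrite mem_intv; nia.
Qed.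

Lemma size_blocks :
  size (setI1 ++ setT_tail ++ setS ++ setI2 ++ setI3) = (8 * sy + 7) * t + (3 * sy + 1).
Proof.
have divT : (a * t ^ 2 - t - 2 * t) %/ t = a * t - 3.
  by rewrite (_ : _ - _ = (a * t - 3) * t) ?mulnK //; nia.
have divS : ((a + 1) * t ^ 2 - 1 - a * t ^ 2) %/ t.+1 = t - 1.
  by rewrite (_ : _ - _ = (t - 1) * t.+1) ?mulnK //; nia.
rewrite (size_cat setI1) (size_cat setT_tail) (size_cat setS) size_cat !size_prodl.
rewrite !size_intv !size_aprog divT divS !subn0 !addKn muln1 subn1 prednK //.
have : 3 <= a * t by rewrite -[3]muln1 leq_mul // leq_addl.
lia.
Qed.

Lemma size_undup_setA : size (undup (setA sy t)) = (8 * sy + 7) * t + (3 * sy + 1).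
Proof.
rewrite -size_blocks; apply/perm_size/uniq_perm; first exact: undup_uniq.
  by case: uniq_in_strip_blocks.
by move=> p; rewrite mem_undup setA_blocks.
Qed.

End SetA.

Theorem mainTheorem13 (sy t : nat) (ht : 1 <= t) :
  size (undup (setA sy t)) = (8 * sy + 7) * t + (3 * sy + 1) /\
  (forall x y : nat, x <= (16 * sy + 14) * t ^ 2 - 1 -> y <= sy ->
     in_sumset (setA sy t) (x, y)).
Proof.
split; first exact: size_undup_setA.
move=> x y x_le y_le; apply: setA_sumset_cover => //.
have : 0 < t ^ 2 by rewrite expn_gt0 ht.
lia.
Qed.
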